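(* Consider the stochastic bipartite matching model described in the context, under the stability condition, with stationary distribution $\pi$. Then \[ \sum_{(i,k)\in\mathcal{I}\times\mathcal{K}} \lambda_i\mu_k \sum_{\substack{\mathcal{A}\in\mathcal{J}:\ i\in\mathcal{I}(\mathcal{A}\cap\mathcal{K}),\\ k\in\mathcal{K}(\mathcal{A}\cap\mathcal{I})}} \pi(\mathcal{A}) \;=\; \sum_{\substack{(i,k)\in\mathcal{I}\times\mathcal{K}:\\ i\nsim k}} \lambda_i\mu_k \sum_{\substack{\mathcal{A}\in\mathcal{J}_0:\ i\notin\mathcal{I}(\mathcal{A}\cap\mathcal{K}),\\ k\notin\mathcal{K}(\mathcal{A}\cap\mathcal{I})}} \pi(\mathcal{A}). \]
   Context: Let $\mathcal{I}$ (customer classes) and $\mathcal{K}$ (server classes) be disjoint finite non-empty sets, and consider a connected bipartite graph (the compatibility graph) on $\mathcal{I}\cup\mathcal{K}$ whose edges all join an element of $\mathcal{I}$ to an element of $\mathcal{K}$; write $i\sim k$ if $i\in\mathcal{I}$ and $k\in\mathcal{K}$ are adjacent and $i\nsim k$ otherwise. For $i\in\mathcal{I}$ let $\mathcal{K}_i=\{k\in\mathcal{K}: i\sim k\}$ and for $k\in\mathcal{K}$ let $\mathcal{I}_k=\{i\in\mathcal{I}: i\sim k\}$. Let $\lambda_i>0$ ($i\in\mathcal{I}$) and $\mu_k>0$ ($k\in\mathcal{K}$) with $\sum_i\lambda_i=\sum_k\mu_k=1$. For $\mathcal{A}\subseteq\mathcal{I}$ write $\lambda(\mathcal{A})=\sum_{i\in\mathcal{A}}\lambda_i$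 and $\mathcal{K}(\mathcal{A})=\bigcup_{i\in\mathcal{A}}\mathcal{K}_i$; for $\mathcal{A}\subseteq\mathcal{K}$ write $\mu(\mathcal{A})=\sum_{k\in\mathcal{A}}\mu_k$ and $\mathcal{I}(\mathcal{A})=\bigcup_{k\in\mathcal{A}}\mathcal{I}_k$. Model: time is slotted; in each slot exactly one customer and one server arrive, the customer being of class $i$ with probability $\lambda_i$ and the server of class $k$ with probability $\mu_k$, independently within and across slots. Unmatched customers and unmatched servers wait in two queues in arrival order. Upon each arrival (first-come-first-matched policy): (1) the incoming customer is matched with the longest-waiting compatible unmatched server, if any; (2) the incoming server is matched with the longest-waiting compatible unmatched customer, if any; (3) if neither can be matched with a waiting item, they are matched with each other if compatible; (4) any incoming item still unmatched is appended to the back of its queue. Matched items leave immediately. The state is $(c,d)$ with $c=(c_1,\dots,c_n)$ the classes of unmatched customers and $d=(d_1,\dots,d_n)$ the classes of unmatched servers, in arrival order (the two lengths are always equal); the state space is $\Pi=\bigcup_{n\ge0}\{(c,d)\in\mathcal{I}^n\times\mathcal{K}^n: c_p\nsim d_q\ \forall p,q\}$, and $\varnothing$ denotes the empty state. Stability condition (assumed): $\lambda(\mathcal{A})<\mu(\mathcal{K}(\mathcal{A}))$ for every non-empty $\mathcal{A}\subsetneq\mathcal{I}$ (equivalently $\mu(\mathcal{A})<\lambda(\mathcal{I}(\mathcal{A}))$ for every non-empty $\mathcal{A}\subsetneq\mathcal{K}$). Then the Markov chain of states is ergodic with stationary distribution $\pi(c,d)=\pi(\varnothing)\prod_{p=1}^n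 \frac{\lambda_{c_p}}{\mu(\mathcal{K}(\{c_1,\dots,c_p\}))}\frac{\mu_{d_p}}{\lambda(\mathcal{I}(\{d_1,\dots,d_p\}))}$, $(c,d)\in\Pi$. Let $\mathcal{J}$ be the family of independent sets $\mathcal{A}\subseteq\mathcal{I}\cup\mathcal{K}$ of the compatibility graph such that $\mathcal{A}\cap\mathcal{I}$ and $\mathcal{A}\cap\mathcal{K}$ are both non-empty, and $\mathcal{J}_0=\mathcal{J}\cup\{\emptyset\}$. For $\mathcal{A}\in\mathcal{J}_0$, let $\Pi_{\mathcal{A}}$ be the set of $(c,d)\in\Pi$ with $\{c_1,\dots,c_n\}=\mathcal{A}\cap\mathcal{I}$ and $\{d_1,\dots,d_n\}=\mathcal{A}\cap\mathcal{K}$, and $\pi(\mathcal{A})=\sum_{(c,d)\in\Pi_{\mathcal{A}}}\pi(c,d)$ (for $\mathcal{A}=\emptyset$ this is $\pi(\varnothing)$). *)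

From HB Require Import structures.
From mathcomp Require Import all_boot all_order all_algebra.
From mathcomp Require Import all_classical all_reals all_analysis.
Set Implicit Arguments. Unset Strict Implicit. Unset Printing Implicit Defensive.
Import Order.TTheory GRing.Theory Num.Theory.
Local Open Scope ring_scope.

Section Matching.
Variables (R : realType) (I K : finType) (adj : I -> K -> bool)
  (lam : I -> R) (mu : K -> R).

Definition lamS (A : {set I}) : R := \sum_(i in A) lam i.
Definition muS (A : {set K}) : R := \sum_(k in A) mu k.

Definition Kset (A : {set I}) : {set K} := [set k | [exists i in A, adj i k]].
Definition Iset (A : {set K}) : {set I} := [set i | [exists k in A, adj i k]].

Definition bip_edge : rel (I + K) := fun x y =>
  match x, y with
  | inl i, inr k => adj i k
  | inr k, inl i => adj i k
  | _, _ => false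
  end.
Definition graph_connected : Prop := forall x y : I + K, connect bip_edge x y.

Definition stable : Prop :=
  forall A : {set I}, A != finset.set0 -> A != [set: I] -> lamS A < muS (Kset A).

(* states of length n: c : n-tuple of customer classes, d : n-tuple of
   server classes, with c_p and d_q incompatible for all p, q *)
Definition state_ok n (c : n.-tuple I) (d : n.-tuple K) : bool :=
  [forall p : 'I_n, forall q : 'I_n, ~~ adj (tnth c p) (tnth d q)].

(* prefix sets {c_1,...,c_p} (p 1-based, here q <= p for 0-based p) *)
Definition prefI n (c : n.-tuple I) (p : 'I_n) : {set I} :=
  [set tnth c q | q : 'I_n & (q <= p)%N].
Definition prefK n (d : n.-tuple K) (p : 'I_n) : {set K} :=
  [set tnth d q | q : 'I_n & (q <= p)%N].

Definition weight n (c : n.-tuple I) (d : n.-tuple K) : R :=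
  \prod_(p < n) ((lam (tnth c p) / muS (Kset (prefI c p))) *
                 (mu (tnth d p) / lamS (Iset (prefK d p)))).

Definition norm_const : \bar R :=
  (\sum_(n <oo) (\sum_(c : n.-tuple I) \sum_(d : n.-tuple K | state_ok c d)
      weight c d)%:E)%E.

Definition pi0 : R := (fine norm_const)^-1.

Definition pi n (c : n.-tuple I) (d : n.-tuple K) : R := pi0 * weight c d.

(* a subset A of I ∪ K is represented by the pair (A ∩ I, A ∩ K) *)
Definition inJ (A : {set I} * {set K}) : bool :=
  [&& A.1 != finset.set0, A.2 != finset.set0 &
      [forall i in A.1, forall k in A.2, ~~ adj i k]].
Definition inJ0 (A : {set I} * {set K}) : bool :=
  inJ A || (A == (finset.set0, finset.set0)).

Definition piA (A : {set I} * {set K}) : \bar R :=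
  (\sum_(n <oo) (\sum_(c : n.-tuple I) \sum_(d : n.-tuple K |
      [&& state_ok c d, [set x in c] == A.1 & [set y in d] == A.2])
      pi c d)%:E)%E.

End Matching.

From Pilot Require Import Defs.
From HB Require Import structures.
From mathcomp Require Import all_boot all_order all_algebra.
From mathcomp Require Import all_classical all_reals all_analysis.
From mathcomp Require Import ring.
Set Implicit Arguments. Unset Strict Implicit. Unset Printing Implicit Defensive.
Import Order.TTheory GRing.Theory Num.Theory.
Local Open Scope ring_scope.

(* A state of length n + 1 is a state (c, d) of length n followed by an incompatible pair
   (i, k) with i not in I(d) and k not in K(c), and the product form of pi gives
     pi(c i, d k) * lambda(I(d k)) * mu(K(c i)) = pi(c, d) * lambda_i * mu_k.
   Summed over states, the left-hand side at length n + 1 (the stationary rate of the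
   transitions n + 1 -> n, in which both arrivals are matched with waiting items) thus
   equals the right-hand side at length n (the rate of the transitions n -> n + 1), and
   the left-hand side has no term at length 0. The identity holds length by length. *)

Section Tuples.
Variable T : finType.

Lemma prefix_setE n (c : n.-tuple T) (p : 'I_n) :
  [set tnth c q | q : 'I_n & (q <= p)%N] = [set x in take p.+1 c].
Proof.
have size_take_c : size (take p.+1 c) = p.+1 by rewrite size_takel ?size_tuple.
apply/setP => x; rewrite inE; apply/imsetP/idP => [[q qp ->] | x_c].
  rewrite inE in qp; rewrite (tnth_nth x) -(@nth_take p.+1) //.
  by apply: mem_nth; rewrite size_take_c.
have lt_x_p : (index x (take p.+1 c) < p.+1)%N.
  by rewrite -[X in (_ < X)%N]size_take_c index_mem.
exists (Ordinal (leq_trans lt_x_p (ltn_ord p))); first by rewrite inE /= -ltnS.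
by rewrite (tnth_nth x) /= -(@nth_take p.+1) ?nth_index.
Qed.

Lemma tnth_rcons_widen n (c : n.-tuple T) x (p : 'I_n) :
  tnth (rcons_tuple c x) (widen_ord (leqnSn n) p) = tnth c p.
Proof. by rewrite (tnth_nth x) (tnth_nth x) /= nth_rcons size_tuple ltn_ord. Qed.

Lemma tnth_rcons_max n (c : n.-tuple T) x : tnth (rcons_tuple c x) ord_max = x.
Proof. by rewrite (tnth_nth x) /= nth_rcons size_tuple ltnn eqxx. Qed.

Lemma prefix_set_rcons_widen n (c : n.-tuple T) x (p : 'I_n) :
  [set tnth (rcons_tuple c x) q | q : 'I_n.+1 & (q <= widen_ord (leqnSn n) p)%N]
  = [set tnth c q | q : 'I_n & (q <= p)%N].
Proof. by rewrite !prefix_setE /= -cats1 takel_cat // size_tuple. Qed.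

Lemma prefix_set_rcons_max n (c : n.-tuple T) x :
  [set tnth (rcons_tuple c x) q | q : 'I_n.+1 & (q <= @ord_max n)%N]
  = [set y in rcons c x].
Proof. by rewrite prefix_setE /= take_oversize // size_rcons size_tuple. Qed.

Lemma sum_tuple_rcons (V : nmodType) n (F : n.+1.-tuple T -> V) :
  \sum_(c : n.+1.-tuple T) F c = \sum_(c : n.-tuple T) \sum_(x : T) F (rcons_tuple c x).
Proof.
rewrite pair_big /=.
have rcons_inj : injective (fun cx : n.-tuple T * T => rcons_tuple cx.1 cx.2).
  move=> [c x] [c' x'] /= /(congr1 val) /= eq_rcons.
  have eq_x : x = x' by move: (congr1 (last x) eq_rcons); rewrite !last_rcons.
  subst x'; congr (_, _); apply: val_inj; exact: rcons_injl eq_rcons.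
rewrite (reindex _ (onW_bij _ (inj_card_bij rcons_inj _))) //.
by rewrite card_prod !card_tuple expnS mulnC.
Qed.

End Tuples.

Lemma exchange_big_weighted (R : comPzSemiRingType) (X Y Z : finType)
    (P : pred X) (ok : Y -> Z -> bool) (C : X -> Y -> Z -> bool)
    (w : X -> R) (F : Y -> Z -> R) :
  \sum_(x | P x) w x * \sum_y \sum_(z | ok y z && C x y z) F y z =
  \sum_y \sum_(z | ok y z) F y z * \sum_(x | P x && C x y z) w x.
Proof.
under eq_bigr do rewrite big_distrr /=.
rewrite exchange_big /=; apply: eq_bigr => y _.
under eq_bigr do rewrite big_distrr /= big_mkcond /=.
rewrite exchange_big /= [RHS]big_mkcond /=; apply: eq_bigr => z _.
case: (ok y z) => /=; last by rewrite big1 // => x _; rewrite mulr0.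
rewrite big_distrr /= [LHS]big_mkcond [RHS]big_mkcond /=; apply: eq_bigr => x _.
by case: (P x); case: (C x y z); rewrite /= ?mulr0 ?mul0r // mulrC.
Qed.

Lemma nneseries_shift (R : realType) (f : nat -> \bar R) :
  (forall n, 0 <= f n)%E -> f 0%N = 0%E ->
  (\sum_(n <oo) f n = \sum_(n <oo) f n.+1)%E.
Proof.
move=> f_ge0 f0; rewrite nneseries_recl // f0 add0e -nneseries_addn //.
by apply: eq_eseriesr => n _; rewrite addn1.
Qed.

Lemma card_gt0_sum_eq1 (R : nzSemiRingType) (T : finType) (f : T -> R) :
  \sum_(t : T) f t = 1 -> (0 < #|T|)%N.
Proof.
move=> sum_f1; rewrite lt0n; apply/negP => /eqP /card0_eq T0.
by move/eqP: sum_f1; rewrite big_pred0 // eq_sym oner_eq0.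
Qed.

Section Connectivity.
Variables (I K : finType) (adj : I -> K -> bool).
Hypothesis conn : graph_connected adj.

Lemma connected_adjI : (0 < #|K|)%N -> forall i, exists k, adj i k.
Proof.
move=> /card_gt0P[k0 _] i.
case/connectP: (conn (inl i) (inr k0)) => -[|[i' | k] p] //= /andP[adj_ik _] _.
by exists k.
Qed.

Lemma connected_adjK : (0 < #|I|)%N -> forall k, exists i, adj i k.
Proof.
move=> /card_gt0P[i0 _] k.
case/connectP: (conn (inr k) (inl i0)) => -[|[i | k'] p] //= /andP[adj_ik _] _.
by exists i.
Qed.

End Connectivity.

Section Balance.
Variables (R : realType) (I K : finType) (adj : I -> K -> bool)
  (lam : I -> R) (mu : K -> R).
Hypotheses (lam_gt0 : forall i, 0 < lam i) (mu_gt0 : forall k, 0 < mu k).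
Hypotheses (adjI : forall i, exists k, adj i k) (adjK : forall k, exists i, adj i k).
Local Notation pi := (Defs.pi adj lam mu).

Lemma state_okE n (c : n.-tuple I) (d : n.-tuple K) :
  state_ok adj c d = allrel (fun i k => ~~ adj i k) c d.
Proof.
apply/forallP/allrelP => [ok _ _ /tnthP[p ->] /tnthP[q ->] | ok p].
  exact: (forallP (ok p) q).
by apply/forallP => q; apply: ok; exact: mem_tnth.
Qed.

Lemma mem_Iset_seq (i : I) (d : seq K) : (i \in Iset adj [set y in d]) = has (adj i) d.
Proof.
rewrite inE; apply/existsP/hasP => [[k /andP[]] | [k d_k adj_ik]].
  by rewrite inE; exists k.
by exists k; rewrite inE d_k.
Qed.

Lemma mem_Kset_seq (k : K) (c : seq I) : (k \in Kset adj [set x in c]) = has (adj^~ k) c.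
Proof.
rewrite inE; apply/existsP/hasP => [[i /andP[]] | [i c_i adj_ik]].
  by rewrite inE; exists i.
by exists i; rewrite inE c_i.
Qed.

Lemma state_ok_rcons n (c : n.-tuple I) (d : n.-tuple K) i k :
  state_ok adj (rcons_tuple c i) (rcons_tuple d k) =
  [&& state_ok adj c d, ~~ adj i k, i \notin Iset adj [set y in d]
    & k \notin Kset adj [set x in c]].
Proof.
rewrite !state_okE mem_Iset_seq mem_Kset_seq -!all_predC /= -!cats1.
rewrite allrel_catl !allrel_catr !allrel1l allrel1r /= andbT.
by case: (allrel _ c d); case: (adj i k); rewrite //= ?andbF // andbT andbC.
Qed.

Lemma weight_rcons n (c : n.-tuple I) (d : n.-tuple K) i k :
  weight adj lam mu (rcons_tuple c i) (rcons_tuple d k) =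
  weight adj lam mu c d * ((lam i / muS mu (Kset adj [set x in rcons c i])) *
                           (mu k / lamS lam (Iset adj [set y in rcons d k]))).
Proof.
rewrite /weight big_ord_recr /=; congr (_ * _).
  apply: eq_bigr => p _.
  by rewrite /prefI /prefK !tnth_rcons_widen !prefix_set_rcons_widen.
by rewrite /prefI /prefK !tnth_rcons_max !prefix_set_rcons_max.
Qed.

Lemma lamS_ge0 A : 0 <= lamS lam A.
Proof. by apply: sumr_ge0 => i _; exact: ltW. Qed.

Lemma muS_ge0 A : 0 <= muS mu A.
Proof. by apply: sumr_ge0 => k _; exact: ltW. Qed.

Lemma lamS_gt0 (A : {set I}) i : i \in A -> 0 < lamS lam A.
Proof.
move=> A_i; rewrite /lamS (bigD1 i) //= ltr_pwDl //.
by apply: sumr_ge0 => j _; exact: ltW.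
Qed.

Lemma muS_gt0 (A : {set K}) k : k \in A -> 0 < muS mu A.
Proof.
move=> A_k; rewrite /muS (bigD1 k) //= ltr_pwDl //.
by apply: sumr_ge0 => j _; exact: ltW.
Qed.

Lemma weight_ge0 n (c : n.-tuple I) (d : n.-tuple K) : 0 <= weight adj lam mu c d.
Proof.
apply: prodr_ge0 => p _.
by apply: mulr_ge0; apply: divr_ge0; rewrite ?lamS_ge0 ?muS_ge0 ?ltW.
Qed.

Lemma pi_ge0 n (c : n.-tuple I) (d : n.-tuple K) : 0 <= pi c d.
Proof.
rewrite /Defs.pi mulr_ge0 ?weight_ge0 // invr_ge0 fine_ge0 // nneseries_ge0 // => m _ _.
by rewrite lee_fin; do 2!(apply: sumr_ge0 => ? _); exact: weight_ge0.
Qed.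

Lemma pi_rcons_balance n (c : n.-tuple I) (d : n.-tuple K) i k :
  pi (rcons_tuple c i) (rcons_tuple d k) *
    (lamS lam (Iset adj [set y in rcons d k]) * muS mu (Kset adj [set x in rcons c i]))
  = pi c d * (lam i * mu k).
Proof.
have [k' adj_ik'] := adjI i.
have [i' adj_i'k] := adjK k.
have muK_gt0 : 0 < muS mu (Kset adj [set x in rcons c i]).
  by apply: (@muS_gt0 _ k'); rewrite mem_Kset_seq has_rcons adj_ik'.
have lamI_gt0 : 0 < lamS lam (Iset adj [set y in rcons d k]).
  by apply: (@lamS_gt0 _ i'); rewrite mem_Iset_seq has_rcons adj_i'k.
rewrite /Defs.pi weight_rcons; field.
by rewrite !gt_eqF.
Qed.

Definition down_flow n : R :=
  \sum_(c : n.-tuple I) \sum_(d : n.-tuple K | state_ok adj c d)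
    pi c d * (lamS lam (Iset adj [set y in d]) * muS mu (Kset adj [set x in c])).

Definition up_flow n : R :=
  \sum_(c : n.-tuple I) \sum_(d : n.-tuple K | state_ok adj c d)
    pi c d * \sum_(ik : I * K | [&& ~~ adj ik.1 ik.2, ik.1 \notin Iset adj [set y in d]
                                  & ik.2 \notin Kset adj [set x in c]])
               lam ik.1 * mu ik.2.

Lemma down_flow0 : down_flow 0 = 0.
Proof.
rewrite /down_flow big1 // => c _; rewrite big1 // => d _.
by rewrite (tuple0 c) /muS big_pred0 ?mulr0 // => k; rewrite mem_Kset_seq.
Qed.

Lemma down_flow_ge0 n : 0 <= down_flow n.
Proof.
do 2!(apply: sumr_ge0 => ? _).
by rewrite mulr_ge0 ?pi_ge0 // mulr_ge0 ?lamS_ge0 ?muS_ge0.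
Qed.

Lemma down_flowS n : down_flow n.+1 = up_flow n.
Proof.
rewrite /down_flow sum_tuple_rcons; apply: eq_bigr => c _.
transitivity (\sum_(i : I) \sum_(d : n.-tuple K) \sum_(k : K)
  if [&& state_ok adj c d, ~~ adj i k, i \notin Iset adj [set y in d]
       & k \notin Kset adj [set x in c]]
  then pi c d * (lam i * mu k) else 0).
  apply: eq_bigr => i _; rewrite big_mkcond sum_tuple_rcons.
  apply: eq_bigr => d _; apply: eq_bigr => k _.
  by rewrite state_ok_rcons; case: ifP => // _; exact: pi_rcons_balance.
rewrite exchange_big [RHS]big_mkcond; apply: eq_bigr => d _.
rewrite pair_big /=; case: (state_ok adj c d) => /=; last by rewrite big1.
by rewrite big_distrr [RHS]big_mkcond.
Qed.

Definition piA_level (A : {set I} * {set K}) n : R :=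
  \sum_(c : n.-tuple I) \sum_(d : n.-tuple K |
      [&& state_ok adj c d, [set x in c] == A.1 & [set y in d] == A.2]) pi c d.

Lemma piA_level_ge0 A n : 0 <= piA_level A n.
Proof. by do 2!(apply: sumr_ge0 => ? _); exact: pi_ge0. Qed.

Lemma sum_piA_level (Q : pred ({set I} * {set K})) n :
  \sum_(A | Q A) piA_level A n =
  \sum_(c : n.-tuple I)
    \sum_(d : n.-tuple K | state_ok adj c d && Q ([set x in c], [set y in d])) pi c d.
Proof.
rewrite exchange_big; apply: eq_bigr => c _.
rewrite [RHS]big_mkcond; under eq_bigr do rewrite big_mkcond.
rewrite exchange_big; apply: eq_bigr => d _ /=.
case: (state_ok adj c d) => /=; last by rewrite big1.
under eq_bigr => A _ do rewrite -xpair_eqE -surjective_pairing.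
rewrite -big_mkcondr; case: (boolP (Q _)) => [Q_cd | notQ_cd].
  rewrite (big_pred1 ([set x in c], [set y in d])) // => A /=.
  by rewrite [RHS]eq_sym; case: eqP => [<- | _]; rewrite ?andbT ?andbF.
rewrite big_pred0 // => A.
by case: eqP => [<- | _]; rewrite ?andbT ?andbF // (negPf notQ_cd).
Qed.

Lemma sum_piA (Q : pred ({set I} * {set K})) :
  (\sum_(A | Q A) piA adj lam mu A = \sum_(n <oo) (\sum_(A | Q A) piA_level A n)%:E)%E.
Proof.
rewrite -nneseries_sum; last by move=> A n _; rewrite lee_fin piA_level_ge0.
by apply: eq_eseriesr => n _; rewrite sumEFin.
Qed.

Lemma weighted_sum_piA (P : pred (I * K)) (Q : I * K -> pred ({set I} * {set K}))
    (w : I * K -> R) : (forall ik, 0 <= w ik) ->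
  (\sum_(ik | P ik) (w ik)%:E * \sum_(A | Q ik A) piA adj lam mu A =
   \sum_(n <oo) (\sum_(c : n.-tuple I) \sum_(d : n.-tuple K | state_ok adj c d)
      pi c d * \sum_(ik | P ik && Q ik ([set x in c], [set y in d])) w ik)%:E)%E.
Proof.
move=> w_ge0.
have levels_ge0 ik n : (0 <= (\sum_(A | Q ik A) piA_level A n)%:E)%E.
  by rewrite lee_fin sumr_ge0 // => A _; exact: piA_level_ge0.
under eq_bigr => ik _ do rewrite sum_piA -(nneseriesZl _ _ (fun n _ => levels_ge0 ik n)).
rewrite -nneseries_sum; last by move=> ik n _; rewrite mule_ge0 ?levels_ge0 ?lee_fin.
apply: eq_eseriesr => n _; under eq_bigr do rewrite -EFinM sum_piA_level.
by rewrite sumEFin exchange_big_weighted.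
Qed.

Lemma state_inJ n (c : n.+1.-tuple I) (d : n.+1.-tuple K) :
  state_ok adj c d -> inJ adj ([set x in c], [set y in d]).
Proof.
rewrite state_okE => /allrelP ok; apply/and3P; split.
- by apply/set0Pn; exists (tnth c ord0); rewrite inE mem_tnth.
- by apply/set0Pn; exists (tnth d ord0); rewrite inE mem_tnth.
apply/forall_inP => i; rewrite inE => c_i; apply/forall_inP => k; rewrite inE => d_k.
exact: ok.
Qed.

Lemma state_inJ0 n (c : n.-tuple I) (d : n.-tuple K) :
  state_ok adj c d -> inJ0 adj ([set x in c], [set y in d]).
Proof.
case: n c d => [|n] c d ok; last by rewrite /inJ0 state_inJ.
rewrite /inJ0 (tuple0 c) (tuple0 d); apply/orP; right.
by rewrite xpair_eqE; apply/andP; split; apply/eqP/setP => x; rewrite !inE.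
Qed.

Lemma lamS_mul_muS (A : {set I}) (B : {set K}) :
  lamS lam A * muS mu B =
  \sum_(ik : I * K | (ik.1 \in A) && (ik.2 \in B)) lam ik.1 * mu ik.2.
Proof.
rewrite /lamS /muS big_distrl /=.
under eq_bigr do rewrite big_distrr /=.
by rewrite pair_big_dep.
Qed.

Lemma sum_piA_adjacent :
  (\sum_(ik : I * K) (lam ik.1 * mu ik.2)%:E *
      \sum_(A | [&& inJ adj A, ik.1 \in Iset adj A.2 & ik.2 \in Kset adj A.1])
        piA adj lam mu A
   = \sum_(n <oo) (down_flow n)%:E)%E.
Proof.
rewrite weighted_sum_piA => [|ik]; last by rewrite mulr_ge0 ?ltW.
apply: eq_eseriesr => n _; congr EFin; apply: eq_bigr => c _.
apply: eq_bigr => d ok; rewrite lamS_mul_muS; congr (_ * _); apply: eq_bigl => ik /=.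
case: n c d ok => [|n] c d ok; last by rewrite state_inJ.
by rewrite (tuple0 d) mem_Iset_seq /= andbF.
Qed.

Lemma sum_piA_nonadjacent :
  (\sum_(ik : I * K | ~~ adj ik.1 ik.2) (lam ik.1 * mu ik.2)%:E *
      \sum_(A | [&& inJ0 adj A, ik.1 \notin Iset adj A.2 & ik.2 \notin Kset adj A.1])
        piA adj lam mu A
   = \sum_(n <oo) (up_flow n)%:E)%E.
Proof.
rewrite weighted_sum_piA => [|ik]; last by rewrite mulr_ge0 ?ltW.
apply: eq_eseriesr => n _; congr EFin; apply: eq_bigr => c _.
by apply: eq_bigr => d ok; congr (_ * _); apply: eq_bigl => ik /=; rewrite state_inJ0.
Qed.

End Balance.

Theorem corollary1 (R : realType) (I K : finType) (adj : I -> K -> bool)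
    (lam : I -> R) (mu : K -> R)
    (lam_pos : forall i, 0 < lam i) (mu_pos : forall k, 0 < mu k)
    (lam_sum : \sum_(i : I) lam i = 1) (mu_sum : \sum_(k : K) mu k = 1)
    (conn : graph_connected adj)
    (stab : stable adj lam mu) :
  (\sum_(ik : I * K)
      (lam ik.1 * mu ik.2)%:E *
      \sum_(A : {set I} * {set K} |
              [&& inJ adj A, ik.1 \in Iset adj A.2 & ik.2 \in Kset adj A.1])
        piA adj lam mu A
   =
   \sum_(ik : I * K | ~~ adj ik.1 ik.2)
      (lam ik.1 * mu ik.2)%:E *
      \sum_(A : {set I} * {set K} |
              [&& inJ0 adj A, ik.1 \notin Iset adj A.2 & ik.2 \notin Kset adj A.1])
        piA adj lam mu A)%E.
Proof.
have adjI := connected_adjI conn (card_gt0_sum_eq1 mu_sum).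
have adjK := connected_adjK conn (card_gt0_sum_eq1 lam_sum).
rewrite sum_piA_adjacent // sum_piA_nonadjacent //.
rewrite nneseries_shift; first by apply: eq_eseriesr => n _; rewrite down_flowS.
- by move=> n; rewrite lee_fin down_flow_ge0.
- by rewrite down_flow0.
Qed.
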